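(* Let $R:\mathbb{N}\to[0,1]$ satisfy $R(n)\to0$. Then there exist numbers $p_1,p_2,\ldots\ge0$ with $\sum_{k\ge1}p_k=1$, two strictly increasing sequences of positive integers $(n_i)_{i\ge1}$ and $(k_i)_{i\ge1}$, and a constant $C\in[\tfrac12,1]$ such that for all $i>1$: (a) $\sum_{k>k_i}p_k\le\frac{1}{n_i}$; (b) $n_ip_{k_i}\le k_i$; (c) $p_{k_i}=CR(n_i)$. *)

From Stdlib Require Import Reals.
From Coquelicot Require Export Coquelicot.
Open Scope R_scope.

From Stdlib Require Import Reals Lra Lia ClassicalEpsilon.
From Coquelicot Require Import Coquelicot.
Open Scope R_scope.

(* Since Rf tends to 0, we can pick indices 1 = n 0 < n 1 < ...
   with Rf (n (i+1)) <= 2^-(i+1) / (n i + 1).  Put the weight Rf (n i) / 2 at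
   position k i = n i + 1 (for i >= 1), the remaining mass at position n 0 + 1,
   and 0 everywhere else.  The sampling bound makes the weights after stage i
   decay geometrically with factor 1 / n i, so the mass after k i is at most
   1 / n i; the other conditions hold with C = 1/2 by construction. *)

Lemma is_series_telescoping (b : nat -> R) (L : R) :
  is_lim_seq b L -> is_series (fun j => b j - b (S j)) (b O - L).
Proof.
  intros Hb.
  assert (Hpartial : forall N, sum_n (fun j => b j - b (S j)) N = b O - b (S N)).
  { induction N as [|N IH].
    - now rewrite sum_O.
    - rewrite sum_Sn, IH. unfold plus; simpl. ring. }
  change (is_lim_seq (sum_n (fun j => b j - b (S j))) (b O - L)).
  apply (is_lim_seq_ext (fun N => b O - b (S N))).
  { intros N. now rewrite Hpartial. }
  apply is_lim_seq_minus'; [apply is_lim_seq_const|].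
  now apply (is_lim_seq_incr_1 b L).
Qed.

Lemma is_series_single (i : nat) (c : R) :
  is_series (fun j => if (j =? i)%nat then c else 0) c.
Proof.
  set (a := fun j => if (j =? i)%nat then c else 0).
  assert (Hpartial : forall N, sum_n a N = if (i <=? N)%nat then c else 0).
  { induction N as [|N IH].
    - rewrite sum_O. unfold a. destruct i; reflexivity.
    - rewrite sum_Sn, IH. unfold a.
      destruct (Nat.eqb_spec (S N) i), (Nat.leb_spec i N), (Nat.leb_spec i (S N));
        try lia; unfold plus; simpl; ring. }
  change (is_lim_seq (sum_n a) c).
  apply (is_lim_seq_incr_n _ i).
  apply (is_lim_seq_ext (fun _ => c)); [|apply is_lim_seq_const].
  intros N. rewrite Hpartial.
  now rewrite (proj2 (Nat.leb_le i (N + i))) by lia.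
Qed.

Lemma is_series_half_geom (c : R) : is_series (fun i => c * (1/2)^i) (2 * c).
Proof.
  assert (Hgeom := is_series_geom (1/2) ltac:(rewrite Rabs_pos_eq; lra)).
  replace (/ (1 - 1/2)) with 2 in Hgeom by field.
  replace (2 * c) with (c * 2) by ring.
  exact (is_series_scal_l c _ 2 Hgeom).
Qed.

Lemma sum_n_le_Series (a : nat -> R) (N : nat) :
  (forall i, 0 <= a i) -> ex_series a -> sum_n a N <= Series a.
Proof.
  intros Ha Hex.
  apply (is_lim_seq_incr_compare (sum_n a) (Series a) (Series_correct a Hex)).
  intros M. rewrite sum_Sn. unfold plus; simpl. specialize (Ha (S M)). lra.
Qed.

Lemma ex_series_restrict (a : nat -> R) (keep : nat -> bool) :
  (forall i, 0 <= a i) -> ex_series a -> ex_series (fun i => if keep i then a i else 0).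
Proof.
  intros Ha Hex. apply (@ex_series_le R_AbsRing R_CompleteNormedModule _ a); [|exact Hex].
  intros i. change norm with Rabs. specialize (Ha i).
  destruct (keep i); rewrite ?Rabs_R0, ?Rabs_pos_eq; lra.
Qed.

Lemma strictly_increasing_lt (f : nat -> nat) :
  (forall i, (f i < f (S i))%nat) -> forall a b, (a < b)%nat -> (f a < f b)%nat.
Proof.
  intros Hf a b Hab. induction Hab as [|b _ IH].
  - apply Hf.
  - specialize (Hf b). lia.
Qed.

Lemma strictly_increasing_le (f : nat -> nat) :
  (forall i, (f i < f (S i))%nat) -> forall a b, (a <= b)%nat -> (f a <= f b)%nat.
Proof.
  intros Hf a b Hab. destruct (Nat.eq_dec a b) as [->|Hne]; [lia|].
  apply Nat.lt_le_incl, (strictly_increasing_lt f Hf). lia.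
Qed.

(* Spreading a nonnegative series [q] along a strictly increasing index
   sequence [m]: the mass [q i] is placed at position [m i] and every other
   position receives 0.  The spread sequence is defined through its tail mass,
   which makes its summation a telescoping argument. *)
Section SpreadSeries.

Variables (q : nat -> R) (m : nat -> nat) (s : R).
Hypothesis q_nonneg : forall i, 0 <= q i.
Hypothesis q_sum : is_series q s.
Hypothesis m_incr : forall i, (m i < m (S i))%nat.

Let q_ex : ex_series q := ex_intro _ s q_sum.

Definition tail_mass (j : nat) : R :=
  Series (fun i => if (j <=? m i)%nat then q i else 0).

Definition spread (j : nat) : R := tail_mass j - tail_mass (S j).

Lemma tail_mass_0 : tail_mass 0 = s.
Proof.
  unfold tail_mass. rewrite (Series_ext _ q); [now apply is_series_unique|].
  intros i. now rewrite (proj2 (Nat.leb_le 0 (m i))) by lia.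
Qed.

Lemma tail_mass_nonneg (j : nat) : 0 <= tail_mass j.
Proof.
  unfold tail_mass.
  apply (Rle_trans _ (sum_n (fun i => if (j <=? m i)%nat then q i else 0) 0)).
  - rewrite sum_O. specialize (q_nonneg 0). destruct (j <=? m 0)%nat; lra.
  - apply sum_n_le_Series; [|now apply ex_series_restrict].
    intros i. specialize (q_nonneg i). destruct (j <=? m i)%nat; lra.
Qed.

(* Once [j] exceeds [m N], the first [N + 1] terms of [q] are no longer
   counted in the tail mass. *)
Lemma tail_mass_le_remainder (N j : nat) :
  (m N < j)%nat -> tail_mass j <= s - sum_n q N.
Proof.
  intros HNj.
  set (rest := fun i => if negb (j <=? m i)%nat then q i else 0).
  assert (Hsplit : tail_mass j + Series rest = s).
  { unfold tail_mass, rest.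
    rewrite <- Series_plus by now apply ex_series_restrict.
    rewrite (Series_ext _ q); [now apply is_series_unique|].
    intros i. destruct (j <=? m i)%nat; simpl; ring. }
  assert (Hrest : sum_n q N <= Series rest).
  { rewrite (sum_n_ext_loc q rest).
    - apply sum_n_le_Series; [|now apply ex_series_restrict].
      intros i. unfold rest. specialize (q_nonneg i). destruct (j <=? m i)%nat; simpl; lra.
    - intros i Hi. unfold rest.
      pose proof (strictly_increasing_le m m_incr i N Hi).
      now rewrite (proj2 (Nat.leb_gt j (m i))) by lia. }
  lra.
Qed.

Lemma tail_mass_lim : is_lim_seq tail_mass 0.
Proof.
  apply is_lim_seq_spec. intros eps.
  assert (Hpartial : is_lim_seq (sum_n q) s) by exact q_sum.
  apply is_lim_seq_spec in Hpartial.
  destruct (Hpartial eps) as [N HN].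
  exists (S (m N)). intros j Hj.
  specialize (HN N (le_n N)).
  pose proof (tail_mass_le_remainder N j ltac:(lia)).
  pose proof (tail_mass_nonneg j).
  rewrite Rminus_0_r, Rabs_pos_eq by lra.
  apply Rabs_lt_between in HN. lra.
Qed.

Lemma spread_nonneg (j : nat) : 0 <= spread j.
Proof.
  enough (tail_mass (S j) <= tail_mass j) by (unfold spread; lra).
  unfold tail_mass. apply Series_le; [|now apply ex_series_restrict].
  intros i. specialize (q_nonneg i).
  destruct (Nat.leb_spec (S j) (m i)), (Nat.leb_spec j (m i)); try lia; lra.
Qed.

Lemma spread_at (i : nat) : spread (m i) = q i.
Proof.
  unfold spread, tail_mass.
  rewrite <- Series_minus by now apply ex_series_restrict.
  rewrite (Series_ext _ (fun i' => if (i' =? i)%nat then q i else 0)).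
  { apply is_series_unique, is_series_single. }
  intros i'.
  destruct (Nat.lt_total i' i) as [Hlt|[->|Hgt]].
  - pose proof (strictly_increasing_lt m m_incr i' i Hlt).
    rewrite (proj2 (Nat.eqb_neq i' i)), (proj2 (Nat.leb_gt (m i) (m i'))),
      (proj2 (Nat.leb_gt (S (m i)) (m i'))) by lia. ring.
  - rewrite Nat.eqb_refl, Nat.leb_refl, (proj2 (Nat.leb_gt (S (m i)) (m i))) by lia. ring.
  - pose proof (strictly_increasing_lt m m_incr i i' Hgt).
    rewrite (proj2 (Nat.eqb_neq i' i)), (proj2 (Nat.leb_le (m i) (m i'))),
      (proj2 (Nat.leb_le (S (m i)) (m i'))) by lia. ring.
Qed.

Lemma spread_tail_sum (k : nat) : is_series (fun j => spread (k + j)) (tail_mass k).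
Proof.
  set (b := fun j => tail_mass (k + j)).
  replace (tail_mass k) with (b O - 0) by (unfold b; rewrite Nat.add_0_r; ring).
  apply (is_series_ext (fun j => b j - b (S j))).
  { intros j. unfold b, spread. now rewrite Nat.add_succ_r. }
  apply is_series_telescoping.
  apply (is_lim_seq_ext (fun j => tail_mass (j + k))); [intros j; now rewrite Nat.add_comm|].
  apply (is_lim_seq_incr_n tail_mass k 0), tail_mass_lim.
Qed.

Lemma spread_sum : is_series spread s.
Proof.
  rewrite <- tail_mass_0. exact (spread_tail_sum 0).
Qed.

Lemma tail_mass_after_le (i : nat) (b : nat -> R) :
  ex_series b -> (forall i', 0 <= b i') -> (forall i', (i < i')%nat -> q i' <= b i') ->
  tail_mass (S (m i)) <= Series b.
Proof.
  intros Hb Hb_nonneg Hqb. unfold tail_mass. apply Series_le; [|exact Hb].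
  intros i'. specialize (q_nonneg i'). specialize (Hb_nonneg i').
  destruct (Nat.leb_spec (S (m i)) (m i')) as [Hle|]; [|lra].
  assert (i < i')%nat.
  { destruct (Nat.lt_ge_cases i i') as [|Hge]; [assumption|].
    pose proof (strictly_increasing_le m m_incr i' i Hge). lia. }
  split; [lra|]. now apply Hqb.
Qed.

End SpreadSeries.

Lemma sample_small_values (u : nat -> R) (bound : nat -> nat -> R) (start : nat) :
  is_lim_seq u 0 -> (forall i a, 0 < bound i a) ->
  exists n : nat -> nat, n O = start /\
    forall i, (n i < n (S i))%nat /\ u (n (S i)) <= bound i (n i).
Proof.
  intros Hu Hbound.
  assert (Hnext : forall i a, exists N, (a < N)%nat /\ u N <= bound i a).
  { intros i a. apply is_lim_seq_spec in Hu.
    destruct (Hu (mkposreal _ (Hbound i a))) as [N HN].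
    exists (Nat.max N (S a)). split; [lia|].
    specialize (HN (Nat.max N (S a)) ltac:(lia)). simpl in HN.
    apply Rabs_lt_between in HN. lra. }
  exists (fix n i := match i with
                    | O => start
                    | S i => proj1_sig (constructive_indefinite_description _ (Hnext i (n i)))
                    end).
  split; [reflexivity|]. intros i.
  destruct (constructive_indefinite_description _ _) as [N HN]. exact HN.
Qed.

Section SampledWeights.

Variables (Rf : nat -> R) (n : nat -> nat).
Hypothesis Rf_range : forall x, 0 <= Rf x <= 1.
Hypothesis n_start : n O = 1%nat.
Hypothesis n_incr : forall i, (n i < n (S i))%nat.
Hypothesis n_sparse : forall i, Rf (n (S i)) <= (1/2)^(S i) / INR (S (n i)).

Definition weight (i : nat) : R :=
  match i with
  | O => 1 - Series (fun i => Rf (n (S i)) / 2)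
  | S i => Rf (n (S i)) / 2
  end.

Lemma n_ge_1 (i : nat) : 1 <= INR (n i).
Proof.
  apply (le_INR 1). rewrite <- n_start. apply (strictly_increasing_le n n_incr). lia.
Qed.

(* After stage [i] the weights decay geometrically, with a factor [1 / n i]:
   this is what makes the tail mass after stage [i] at most [1 / n i]. *)
Lemma weight_after_le (i i' : nat) :
  (i < i')%nat -> 0 <= weight i' <= / (2 * INR (n i)) * (1/2)^i'.
Proof.
  intros Hii'. destruct i' as [|j]; [lia|]. simpl weight.
  pose proof (Rf_range (n (S j))) as Hrange. pose proof (n_sparse j) as Hsparse.
  pose proof (n_ge_1 i) as Hni.
  assert (Hnj : INR (n i) <= INR (S (n j))).
  { apply le_INR. pose proof (strictly_increasing_le n n_incr i j ltac:(lia)). lia. }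
  assert (Hpow : 0 < (1/2)^(S j)) by (apply pow_lt; lra).
  assert (Hshrink : (1/2)^(S j) / INR (S (n j)) <= (1/2)^(S j) / INR (n i)).
  { unfold Rdiv. apply Rmult_le_compat_l; [lra|]. apply Rinv_le_contravar; lra. }
  replace (/ (2 * INR (n i)) * (1/2)^(S j)) with ((1/2)^(S j) / INR (n i) / 2)
    by (field; lra).
  lra.
Qed.

Lemma succ_weight_le (j : nat) : 0 <= weight (S j) <= / 4 * (1/2)^j.
Proof.
  destruct (weight_after_le 0 (S j) ltac:(lia)) as [Hlow Hhigh].
  rewrite n_start in Hhigh. simpl INR in Hhigh. simpl pow in Hhigh.
  split; [exact Hlow|]. lra.
Qed.

Lemma ex_series_succ_weight : ex_series (fun j => weight (S j)).
Proof.
  apply (@ex_series_le R_AbsRing R_CompleteNormedModule _ (fun j => / 4 * (1/2)^j)).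
  - intros j. change norm with Rabs. destruct (succ_weight_le j).
    rewrite Rabs_pos_eq; lra.
  - eexists. apply is_series_half_geom.
Qed.

Lemma succ_weight_mass : Series (fun j => weight (S j)) <= 1/2.
Proof.
  replace (1/2) with (Series (fun j => / 4 * (1/2)^j))
    by (rewrite (is_series_unique _ _ (is_series_half_geom _)); field).
  apply Series_le; [apply succ_weight_le|].
  eexists. apply is_series_half_geom.
Qed.

Lemma weight_nonneg (i : nat) : 0 <= weight i.
Proof.
  destruct i as [|j]; [|apply succ_weight_le].
  pose proof succ_weight_mass as Hmass. simpl in Hmass |- *. lra.
Qed.

Lemma weight_sum : is_series weight 1.
Proof.
  apply is_series_decr_1.
  assert (Hsucc := Series_correct _ ex_series_succ_weight).
  simpl in Hsucc |- *. unfold plus, opp; simpl.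
  replace (1 + - (1 - Series _)) with (Series (fun j => Rf (n (S j)) / 2)) by ring.
  exact Hsucc.
Qed.

Lemma spread_weight_tail (i : nat) : tail_mass weight n (S (n i)) <= 1 / INR (n i).
Proof.
  pose proof (n_ge_1 i).
  replace (1 / INR (n i)) with (Series (fun j => / (2 * INR (n i)) * (1/2)^j))
    by (rewrite (is_series_unique _ _ (is_series_half_geom _)); field; lra).
  apply (tail_mass_after_le weight n weight_nonneg n_incr).
  - eexists. apply is_series_half_geom.
  - intros j. apply Rmult_le_pos; [|apply pow_le; lra].
    apply Rlt_le, Rinv_0_lt_compat. lra.
  - intros j Hij. apply (weight_after_le i j Hij).
Qed.

End SampledWeights.

Theorem mainTheorem14 (Rf : nat -> R)
  (Hrange : forall n : nat, 0 <= Rf n <= 1)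
  (Hlim : is_lim_seq Rf 0) :
  exists (p : nat -> R) (n k : nat -> nat) (C : R),
    (forall j : nat, (1 <= j)%nat -> 0 <= p j) /\
    is_series (fun j : nat => p (S j)) 1 /\
    (forall i : nat, (1 <= i)%nat -> (0 < n i)%nat /\ (n i < n (S i))%nat) /\
    (forall i : nat, (1 <= i)%nat -> (0 < k i)%nat /\ (k i < k (S i))%nat) /\
    1 / 2 <= C <= 1 /\
    (forall i : nat, (1 < i)%nat ->
       (exists s : R, is_series (fun j : nat => p (S (k i + j))) s
                      /\ s <= 1 / INR (n i)) /\
       INR (n i) * p (k i) <= INR (k i) /\
       p (k i) = C * Rf (n i)).
Proof.
  destruct (sample_small_values Rf (fun i a => (1/2)^(S i) / INR (S a)) 1 Hlim)
    as [n [n_start Hn]].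
  { intros i a. apply Rdiv_lt_0_compat; [apply pow_lt; lra | apply lt_0_INR; lia]. }
  assert (n_incr : forall i, (n i < n (S i))%nat) by apply Hn.
  assert (n_sparse : forall i, Rf (n (S i)) <= (1/2)^(S i) / INR (S (n i))) by apply Hn.
  pose proof (weight_nonneg Rf n Hrange n_start n_incr n_sparse) as q_nonneg.
  pose proof (weight_sum Rf n Hrange n_start n_incr n_sparse) as q_sum.
  set (q := weight Rf n) in *.
  exists (fun j => spread q n (pred j)), n, (fun i => S (n i)), (1/2).
  split; [|split; [|split; [|split; [|split]]]].
  - intros j _. exact (spread_nonneg q n 1 q_nonneg q_sum (pred j)).
  - exact (spread_sum q n 1 q_nonneg q_sum n_incr).
  - intros i _. split; [|apply n_incr].
    pose proof (strictly_increasing_le n n_incr 0 i ltac:(lia)). lia.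
  - intros i _. split; [lia|]. specialize (n_incr i). lia.
  - lra.
  - intros [|i] Hi; [lia|]. simpl pred.
    rewrite (spread_at q n 1 q_nonneg q_sum n_incr). simpl q.
    split; [|split].
    + exists (tail_mass q n (S (n (S i)))). split.
      * exact (spread_tail_sum q n 1 q_nonneg q_sum n_incr (S (n (S i)))).
      * exact (spread_weight_tail Rf n Hrange n_start n_incr n_sparse (S i)).
    + rewrite S_INR. pose proof (Hrange (n (S i))). pose proof (pos_INR (n (S i))). nra.
    + lra.
Qed.
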